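(* Let $T_1,T_2$ be unordered increasing trees with disjoint vertex-sets, let $v_1\in V(T_1)$, $v_2\in V(T_2)$ with $v_1>v_2$, and let $R=\mathrm{spl}(T_1,v_1;T_2,v_2)$. Then: (a) For $\ell\in\{1,2\}$ and any vertices $i,j$ of $T_\ell$, $i$ is an ancestor of $j$ in $T_\ell$ if and only if $i$ is an ancestor of $j$ in $R$. Consequently, given the sets $V(T_1)$ and $V(T_2)$, the trees $T_1$ and $T_2$ can be recovered from $R$. (b) For every vertex $i$ of $T_1$, $\sigma_i(R)=\sigma_i(T_1)$; moreover $\sigma_{v_2}(R)=\sigma_{v_2}(T_2)+1$, and $\sigma_i(R)=\sigma_i(T_2)$ for every other vertex $i\ne v_2$ of $T_2$.
   Context: An unordered increasing tree is a rooted tree whose vertices are distinct positive integers, sons unordered, each son larger than its father. Ancestors/descendants are defined as usual in the rooted tree. $\sigma_i(T)$ denotes the number of sons of vertex $i$ in $T$. $v$-decomposition: for a vertex $v$ of an unordered increasing tree $T$, let $a_1<a_2<\dots<a_k=v$ be the chain from the root $a_1$ to $v$. Removing the edges of this chain leaves $k$ components, each an unordered increasing tree rooted at some $a_i$; call $T^{(a_i)}$ the component rooted at $a_i$. The list $T^{(a_1)},\dots,T^{(a_k)}$ is the $v$-decomposition of $T$. Splice: let $T_1,T_2$ be unordered increasing trees with disjoint vertex-sets, $v_1\in V(T_1)$, $v_2\in V(T_2)$, $v_1>v_2$, with $v_1$-decomposition $T_1^{(a_1)},\dots,T_1^{(a_k)}$ of $T_1$ and $v_2$-decomposition $T_2^{(b_1)},\dots,T_2^{(b_m)}$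 of $T_2$. Then $\mathrm{spl}(T_1,v_1;T_2,v_2)$ is the unordered increasing tree on $V(T_1)\cup V(T_2)$ obtained by sorting $\{a_1,\dots,a_k\}\cup\{b_1,\dots,b_m\}$ increasingly into $c_1<\dots<c_{k+m}$ (so $c_{k+m}=v_1$), joining these into a chain with $c_1$ the root and $c_{s}$ the father of $c_{s+1}$, and attaching at each $c_s$ the tree among $T_1^{(a_i)},T_2^{(b_j)}$ rooted at $c_s$; equivalently it is the tree whose $v_1$-decomposition is the list of all the $T_1^{(a_i)}$ and $T_2^{(b_j)}$ ordered by their roots. *)

From mathcomp Require Import all_boot.

Set Implicit Arguments. Unset Strict Implicit. Unset Printing Implicit Defensive.

(* An unordered increasing tree is represented by its (finite, duplicate-free,
   nonempty) vertex set V : seq nat together with a father function p : nat -> nat.  The values of p outside V and at the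
   root are irrelevant (junk). *)

Definition troot (V : seq nat) : nat := \big[minn/head 0 V]_(x <- V) x.

Definition is_inc_tree (V : seq nat) (p : nat -> nat) : Prop :=
  [/\ V != [::], uniq V &
      forall x, x \in V -> x != troot V -> (p x \in V) /\ (p x < x)].

(* i is a (proper) ancestor of j: i is obtained from j by going up k >= 1
   times along the father function, never going above the root.  Such a k is
   at most the number of vertices (a root path visits distinct vertices), so
   the search over k is bounded by size V, which makes the notion boolean. *)
Definition ancestor (V : seq nat) (p : nat -> nat) (i j : nat) : bool :=
  (j \in V) &&
  has (fun k => (iter k p j == i) &&
                all (fun m => iter m p j != troot V) (iota 0 k))
      (iota 1 (size V)).

Definition sons (V : seq nat) (p : nat -> nat) (i : nat) : nat :=
  count (fun x => (x != troot V) && (p x == i)) V.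

Definition chain (V : seq nat) (p : nat -> nat) (v : nat) : seq nat :=
  [seq x <- V | ancestor V p x v || (x == v)].

Definition disjoint_seq (V1 V2 : seq nat) : bool := all (fun x => x \notin V2) V1.

(* The merged chain
   C = {a_1..a_k} u {b_1..b_m} is joined increasingly (the father of a
   non-minimal chain vertex x is the largest chain vertex below x), and every
   component T1^(a_i), T2^(b_j) of the decompositions keeps its edges: the
   edges of T_l that are not chain edges are exactly the edges (x, p_l x)
   with x not on the chain of T_l. *)
Definition spl_par (V1 : seq nat) (p1 : nat -> nat) (v1 : nat)
                   (V2 : seq nat) (p2 : nat -> nat) (v2 : nat) : nat -> nat :=
  fun x =>
    let C := chain V1 p1 v1 ++ chain V2 p2 v2 in
    if x \in C then \max_(c <- C | c < x) c
    else if x \in V1 then p1 x else p2 x.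

Definition spl_vert (V1 V2 : seq nat) : seq nat := V1 ++ V2.

From mathcomp Require Import all_boot zify.

Set Implicit Arguments. Unset Strict Implicit. Unset Printing Implicit Defensive.

(* Call a set C of vertices a root chain if it contains the root and the father
   of each of its other elements is its predecessor in C; the chain of any
   vertex is one.  Inside a root chain, ancestry coincides with <.  The splice
   merges the chains C1 of v1 and C2 of v2 into the root chain C1 ++ C2 of R
   and keeps every other father edge, so ancestry between vertices of T_l is
   the same in T_l and in R; since the father of x is its largest ancestor,
   this also recovers T_1 and T_2.  Sons off the chains are unchanged, and in
   a root chain topped by m every element but m has exactly one chain son.
   The top of C1 ++ C2 is v1, the top of C1, whereas v2 < v1 stops being a
   top: this is the one extra son of v2. *)

Lemma troot_min V x : x \in V -> troot V <= x.
Proof.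
rewrite /troot; elim: V (head 0 V) => // a V IH d.
by rewrite inE big_cons geq_min => /orP [/eqP ->|/IH ->]; rewrite ?leqnn ?orbT.
Qed.

Lemma troot_mem V : V != [::] -> troot V \in V.
Proof.
case: V => // a V _; rewrite /troot big_seq /=.
apply: (big_ind (fun y => y \in a :: V)) => //; first exact: mem_head.
by move=> x y xV yV; rewrite /minn; case: ifP.
Qed.

Definition root_chain (V : seq nat) (p : nat -> nat) (C : seq nat) : Prop :=
  [/\ {subset C <= V}, troot V \in C &
      forall j, j \in C -> j != troot V ->
        p j \in C /\ (forall c, c \in C -> c < j -> c <= p j)].

Section IncreasingTree.
Variables (V : seq nat) (p : nat -> nat).
Hypothesis tree : is_inc_tree V p.
Local Notation r := (troot V).

Lemma father_mem x : x \in V -> x != r -> p x \in V.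
Proof. by case: tree => _ _ H xV xr; case: (H x xV xr). Qed.

Lemma father_lt x : x \in V -> x != r -> p x < x.
Proof. by case: tree => _ _ H xV xr; case: (H x xV xr). Qed.

Lemma tree_troot_mem : r \in V.
Proof. by case: tree => /troot_mem. Qed.

Lemma tree_uniq : uniq V.
Proof. by case: tree. Qed.

(* Fathers decrease, so a path towards the root visits distinct vertices. *)
Lemma iter_father_bound j k : j \in V ->
  (forall m, m < k -> iter m p j != r) -> k <= size V.
Proof.
move=> jV notr.
have iterV m : m <= k -> iter m p j \in V.
  elim: m => [|m IH] mk //=.
  by apply: father_mem; [apply: IH; apply: ltnW | apply: notr].
have decr : {in gtn k &, {homo (fun m => iter m p j) : a b / a < b >-> b < a}}.
  apply: homo_ltn_in => [y x z yx zy|a b aD bD c|m mk _]; first exact: ltn_trans zy yx.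
    move: aD bD; rewrite !inE /=; lia.
  by apply: father_lt; [apply: iterV; apply: ltnW | apply: notr].
rewrite -(size_iota 0 k) -(size_map (fun m => iter m p j)); apply: uniq_leq_size.
  rewrite map_inj_in_uniq ?iota_uniq // => a b; rewrite !mem_iota /= !add0n.
  move=> ak bk eq_ab; have [ab|ba|//] := ltngtP a b.
    by have := decr a b ak bk ab; lia.
  by have := decr b a bk ak ba; lia.
by move=> x /mapP [m]; rewrite mem_iota => /andP [_ mk] ->; apply: iterV; lia.
Qed.

Lemma ancestorE i j : ancestor V p i j =
  [&& j \in V, j != r & (p j == i) || ancestor V p i (p j)].
Proof.
rewrite /ancestor; case jV: (j \in V) => //=; apply/idP/idP.
- case/hasP=> k; rewrite mem_iota => /andP [k1 kV] /andP [/eqP ik /allP notr].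
  have jr : j != r by apply: (notr 0); rewrite mem_iota.
  rewrite jr /=; case: k k1 kV ik notr => [//|[|k]] _ kV ik notr.
    by rewrite -ik eqxx.
  apply/orP; right; rewrite father_mem //=; apply/hasP; exists k.+1.
    by rewrite mem_iota; lia.
  apply/andP; split; first by rewrite -iterSr ik.
  apply/allP => m; rewrite mem_iota => mk.
  by rewrite -iterSr; apply: notr; rewrite mem_iota; lia.
- case/andP=> jr /orP [/eqP pj|].
    apply/hasP; exists 1; last by rewrite /= pj eqxx /= jr.
    by rewrite mem_iota /= add1n ltnS lt0n size_eq0; apply/eqP=> V0; rewrite V0 in jV.
  case/andP=> pjV /hasP [k]; rewrite mem_iota => /andP [k1 kV].
  case/andP=> /eqP ik /allP notr.
  have notr' m : m < k.+1 -> iter m p j != r.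
    by case: m => [//|m] mk; rewrite iterSr; apply: notr; rewrite mem_iota; lia.
  apply/hasP; exists k.+1.
    by have := iter_father_bound jV notr'; rewrite mem_iota; lia.
  apply/andP; split; first by rewrite iterSr ik.
  by apply/allP => m; rewrite mem_iota => mk; apply: notr'; lia.
Qed.

Lemma ancestor_lt i j : ancestor V p i j -> i < j.
Proof.
elim/ltn_ind: j => j IH; rewrite ancestorE => /and3P [jV jr /orP [/eqP <-|]].
  exact: father_lt.
by move/IH => /(_ (father_lt jV jr)) /ltn_trans; apply; apply: father_lt.
Qed.

Lemma ancestor_le_father i j : ancestor V p i j -> i <= p j.
Proof.
by rewrite ancestorE => /and3P [_ _ /orP [/eqP ->|/ancestor_lt/ltnW]].
Qed.

Lemma father_ancestor x : x \in V -> x != r -> ancestor V p (p x) x.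
Proof. by move=> xV xr; rewrite ancestorE xV xr eqxx. Qed.

Lemma troot_ancestor x : x \in V -> x != r -> ancestor V p r x.
Proof.
elim/ltn_ind: x => x IH xV xr; rewrite ancestorE xV xr /=.
have [->|pxr] := eqVneq (p x) r; first by [].
by rewrite IH ?orbT ?father_lt ?father_mem.
Qed.

Lemma ancestor_father x v : ancestor V p x v -> x != r -> ancestor V p (p x) v.
Proof.
elim/ltn_ind: v => v IH; rewrite (ancestorE x) => /and3P [vV vr /orP [/eqP pv|]] xr.
  have xV : x \in V by rewrite -pv father_mem.
  by rewrite ancestorE vV vr pv father_ancestor // orbT.
by move=> /IH H; rewrite ancestorE vV vr H ?orbT // father_lt.
Qed.

Lemma ancestor_total v c j : ancestor V p c v || (c == v) ->
  ancestor V p j v || (j == v) -> c < j -> ancestor V p c j.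
Proof.
elim/ltn_ind: v c j => v IH c j /orP [cv|/eqP ->]; last first.
  by case/orP=> [/ancestor_lt|/eqP ->]; lia.
case/orP=> [jv|/eqP -> //] cj.
move: cv jv; rewrite (ancestorE c) (ancestorE j) => /and3P [vV vr cpv] /and3P [_ _ jpv].
by apply: (IH (p v)); rewrite 1?orbC 1?eq_sym // father_lt.
Qed.

Lemma mem_chain v x : (x \in chain V p v) = (x \in V) && (ancestor V p x v || (x == v)).
Proof. by rewrite mem_filter andbC. Qed.

Lemma chain_self v : v \in V -> v \in chain V p v.
Proof. by move=> vV; rewrite mem_chain vV eqxx orbT. Qed.

Lemma chain_le v x : x \in chain V p v -> x <= v.
Proof. by rewrite mem_chain => /andP [_ /orP [/ancestor_lt/ltnW|/eqP ->]]. Qed.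

Lemma chain_root_chain v : v \in V -> root_chain V p (chain V p v).
Proof.
move=> vV; split.
- by move=> x; rewrite mem_chain => /andP [].
- rewrite mem_chain tree_troot_mem /=.
  by have [->|rv] := eqVneq r v; rewrite ?orbT // troot_ancestor // eq_sym.
move=> j; rewrite !mem_chain => /andP [jV jv] jr; split.
  rewrite father_mem //=; case/orP: jv => [jv|/eqP jv]; first by rewrite ancestor_father.
  by subst j; rewrite father_ancestor.
move=> c; rewrite mem_chain => /andP [_ cv] cj.
exact/ancestor_le_father/(ancestor_total cv jv cj).
Qed.

Lemma ancestor_root_chain C : root_chain V p C -> forall i j, j \in C ->
  ancestor V p i j = (i \in C) && (i < j).
Proof.
move=> [CV rC predC] i; elim/ltn_ind => j IH jC.
rewrite ancestorE (CV _ jC) /=.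
have [jr|jr] := eqVneq j r.
  by case iC: (i \in C); rewrite // jr ltnNge troot_min // CV.
have [pjC pj_max] := predC j jC jr.
have pjj := father_lt (CV _ jC) jr.
rewrite /= IH //; apply/idP/idP.
  case/orP=> [/eqP <-|/andP [iC ipj]]; first by rewrite pjC.
  by rewrite iC (ltn_trans ipj).
case/andP=> iC ij; have := pj_max i iC ij.
by rewrite leq_eqVlt => /orP [/eqP ->|->]; rewrite ?eqxx ?iC ?orbT.
Qed.

Lemma count_root_chain_sons C m i : root_chain V p C -> m \in C ->
  (forall c, c \in C -> c <= m) ->
  count (fun x => [&& x \in C, x != r & p x == i]) V = (i \in C) && (i != m).
Proof.
move=> [CV rC predC] mC m_max.
case E: ((i \in C) && (i != m)); last first.
  apply/eqP; rewrite -leqn0 leqNgt -has_count.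
  apply/hasP => [[x xV /and3P [xC xr /eqP pxi]]].
  have [pxC _] := predC x xC xr.
  have := father_lt xV xr; have := m_max x xC.
  by move: E; rewrite -pxi pxC /= => /negbFE /eqP ->; lia.
case/andP: E => iC im.
have [x /andP [xC ix] x_min] : exists2 x, (x \in C) && (i < x) &
    forall y, (y \in C) && (i < y) -> x <= y.
  have ex_above : exists n, (n \in C) && (i < n).
    by exists m; rewrite mC ltn_neqAle im m_max.
  by case: (ex_minnP ex_above) => x; exists x.
have xr : x != r by apply/eqP => xr; have := troot_min (CV _ iC); lia.
have [pxC px_max] := predC x xC xr.
have pxx := father_lt (CV _ xC) xr.
have pxi : p x = i.
  apply/eqP; rewrite eqn_leq px_max // andbT leqNgt; apply/negP => ipx.
  by have := x_min (p x); rewrite pxC ipx => /(_ isT); lia.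
rewrite (@eq_in_count _ _ (pred1 x)); first by rewrite count_uniq_mem ?tree_uniq ?CV.
move=> y yV /=; apply/idP/idP; last by move/eqP ->; rewrite xC xr pxi eqxx.
case/and3P=> yC yr /eqP pyi; have [_ py_max] := predC y yC yr.
have pyy := father_lt yV yr.
case: (ltngtP x y) => // [xy|yx]; first by have := py_max x xC xy; lia.
by have := px_max y yC yx; lia.
Qed.
End IncreasingTree.

Lemma eq_ancestor V p q : is_inc_tree V p ->
  (forall x, x \in V -> x != troot V -> p x = q x) ->
  forall i j, ancestor V p i j = ancestor V q i j.
Proof.
move=> treep pq; have treeq : is_inc_tree V q.
  by case: treep => V0 Vu H; split=> // x xV xr; rewrite -pq //; apply: H.
move=> i; elim/ltn_ind => j IH; rewrite (ancestorE treep) (ancestorE treeq).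
case jV: (j \in V) => //=; case jr: (j != troot V) => //=.
by rewrite pq // IH // -pq // (father_lt treep).
Qed.

Lemma ancestor_father_eq V p q : is_inc_tree V p -> is_inc_tree V q ->
  (forall i j, i \in V -> j \in V -> ancestor V q i j = ancestor V p i j) ->
  forall x, x \in V -> x != troot V -> q x = p x.
Proof.
move=> treep treeq anc_qp x xV xr; apply/eqP; rewrite eqn_leq.
apply/andP; split.
  by apply: (ancestor_le_father treep); rewrite -anc_qp ?(father_ancestor, father_mem treeq).
by apply: (ancestor_le_father treeq); rewrite anc_qp ?(father_ancestor, father_mem treep).
Qed.

(* On the root chains ancestry is just <, and off them a father step is the
   same step in both trees. *)
Lemma ancestor_embed V p C U q D : is_inc_tree V p -> is_inc_tree U q ->
  root_chain V p C -> root_chain U q D -> {subset V <= U} ->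
  (forall x, x \in V -> (x \in D) = (x \in C)) ->
  (forall x, x \in V -> x \notin C -> q x = p x) ->
  forall i j, i \in V -> j \in V -> ancestor V p i j = ancestor U q i j.
Proof.
move=> treeV treeU chainC chainD VU DC qp i j iV; elim/ltn_ind: j => j IH jV.
case jC: (j \in C).
  by rewrite (ancestor_root_chain treeV chainC) // (ancestor_root_chain treeU chainD) ?DC.
have jr : j != troot V.
  by case: chainC => _ rC _; apply: contraFneq jC => ->.
have jrU : j != troot U.
  by case: chainD => _ rD _; apply: contraFneq jC => jrU; rewrite -DC // jrU.
rewrite (ancestorE treeV) (ancestorE treeU) jV jr (VU _ jV) jrU /= qp ?jC //.
by rewrite IH ?(father_lt treeV) ?(father_mem treeV).
Qed.

Lemma sons_split V p (C : seq nat) i : sons V p i =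
  count (fun x => [&& x \notin C, x != troot V & p x == i]) V +
  count (fun x => [&& x \in C, x != troot V & p x == i]) V.
Proof.
rewrite /sons; move: (troot V) => r.
by elim: V => //= x s ->; case: (x \in C) => /=; lia.
Qed.

Lemma bigmax_cond_mem (s : seq nat) (P : pred nat) c0 : c0 \in s -> P c0 ->
  (\max_(c <- s | P c) c \in s) && P (\max_(c <- s | P c) c).
Proof.
move=> c0s Pc0; have := @leq_bigmax_seq _ s P (fun c => c) c0 c0s Pc0.
rewrite big_seq_cond; set M := \big[maxn/0]_(c <- s | _) c.
have : (M == 0) || (M \in s) && P M.
  apply: (big_ind (fun y => (y == 0) || (y \in s) && P y)) => //.
    by move=> a b; rewrite /maxn; case: ifP.
  by move=> c /andP [-> ->]; rewrite orbT.
by case/orP=> [/eqP ->|//]; rewrite leqn0 => /eqP <-; apply/andP.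
Qed.

Section Splice.
Variables (V1 : seq nat) (p1 : nat -> nat) (V2 : seq nat) (p2 : nat -> nat).
Variables v1 v2 : nat.
Hypotheses (tree1 : is_inc_tree V1 p1) (tree2 : is_inc_tree V2 p2).
Hypotheses (disjV : disjoint_seq V1 V2) (v1V : v1 \in V1) (v2V : v2 \in V2).
Local Notation C1 := (chain V1 p1 v1).
Local Notation C2 := (chain V2 p2 v2).
Local Notation C := (chain V1 p1 v1 ++ chain V2 p2 v2).
Local Notation VR := (spl_vert V1 V2).
Local Notation pR := (spl_par V1 p1 v1 V2 p2 v2).

Let chain1 := chain_root_chain tree1 v1V.
Let chain2 := chain_root_chain tree2 v2V.

Lemma notin_V2 x : x \in V1 -> x \notin V2.
Proof. by move=> xV1; move/allP: disjV; apply. Qed.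

Lemma notin_V1 x : x \in V2 -> x \notin V1.
Proof. by apply: contraTN => /notin_V2. Qed.

Lemma mem_spl_chain1 x : x \in V1 -> (x \in C) = (x \in C1).
Proof.
move=> xV1; rewrite mem_cat orbC; case: chain2 => C2V _ _.
by rewrite (contraNF (C2V x)) ?notin_V2.
Qed.

Lemma mem_spl_chain2 x : x \in V2 -> (x \in C) = (x \in C2).
Proof.
move=> xV2; rewrite mem_cat; case: chain1 => C1V _ _.
by rewrite (contraNF (C1V x)) ?notin_V1.
Qed.

Lemma spl_par_chain x : x \in C -> pR x = \max_(c <- C | c < x) c.
Proof. by rewrite /spl_par => ->. Qed.

Lemma spl_par1 x : x \in V1 -> x \notin C -> pR x = p1 x.
Proof. by rewrite /spl_par => xV1 /negbTE ->; rewrite xV1. Qed.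

Lemma spl_par2 x : x \in V2 -> x \notin C -> pR x = p2 x.
Proof. by rewrite /spl_par => xV2 /negbTE ->; rewrite (negbTE (notin_V1 xV2)). Qed.

Lemma spl_chain_sub : {subset C <= VR}.
Proof.
case: chain1 chain2 => C1V _ _ [C2V _ _] x.
by rewrite !mem_cat => /orP [/C1V ->|/C2V ->]; rewrite ?orbT.
Qed.

Lemma spl_vert_nonnil : VR != [::].
Proof. by have := tree_troot_mem tree1; rewrite /spl_vert; case: V1. Qed.

Lemma spl_troot_chain : troot VR \in C.
Proof.
have rV1 := tree_troot_mem tree1; have rV2 := tree_troot_mem tree2.
move: (troot_mem spl_vert_nonnil); rewrite mem_cat => /orP [rRV|rRV].
  have -> : troot VR = troot V1.
    by apply/eqP; rewrite eqn_leq !troot_min // mem_cat rV1.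
  by case: chain1 => _ rC _; rewrite mem_cat rC.
have -> : troot VR = troot V2.
  by apply/eqP; rewrite eqn_leq !troot_min // mem_cat rV2 orbT.
by case: chain2 => _ rC _; rewrite mem_cat rC orbT.
Qed.

Lemma spl_father_chain x : x \in C -> x != troot VR ->
  [/\ pR x \in C, pR x < x & forall c, c \in C -> c < x -> c <= pR x].
Proof.
move=> xC xr; rewrite spl_par_chain //.
have rx : troot VR < x by rewrite ltn_neqAle eq_sym xr troot_min ?spl_chain_sub.
have /andP [] := @bigmax_cond_mem C (fun c => c < x) _ spl_troot_chain rx.
by split=> // c cC cx; apply: (@leq_bigmax_seq _ C (fun c => c < x) (fun c => c)).
Qed.

Lemma spl_inc_tree : is_inc_tree VR pR.
Proof.
split.
- exact: spl_vert_nonnil.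
- rewrite cat_uniq (tree_uniq tree1) (tree_uniq tree2) andbT /=.
  by apply/hasP => -[x /notin_V1 /negP].
move=> x xR xr; case xC: (x \in C).
  by case: (spl_father_chain xC xr) => /spl_chain_sub.
move: xR; rewrite mem_cat => /orP [xV|xV].
  have xr1 : x != troot V1.
    by case: chain1 => _ rC _; apply: contraFneq xC => ->; rewrite mem_cat rC.
  by rewrite spl_par1 ?xC // mem_cat (father_mem tree1) ?(father_lt tree1).
have xr2 : x != troot V2.
  by case: chain2 => _ rC _; apply: contraFneq xC => ->; rewrite mem_cat rC orbT.
by rewrite spl_par2 ?xC // mem_cat (father_mem tree2) ?(father_lt tree2) ?orbT.
Qed.

Lemma spl_root_chain : root_chain VR pR C.
Proof.
split=> [||j jC jr]; [exact: spl_chain_sub | exact: spl_troot_chain |].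
by case: (spl_father_chain jC jr).
Qed.

Lemma spl_ancestor1 i j : i \in V1 -> j \in V1 ->
  ancestor V1 p1 i j = ancestor VR pR i j.
Proof.
apply: (ancestor_embed tree1 spl_inc_tree chain1 spl_root_chain).
- by move=> x xV1; rewrite mem_cat xV1.
- exact: mem_spl_chain1.
by move=> x xV1 xC1; rewrite spl_par1 ?mem_spl_chain1.
Qed.

Lemma spl_ancestor2 i j : i \in V2 -> j \in V2 ->
  ancestor V2 p2 i j = ancestor VR pR i j.
Proof.
apply: (ancestor_embed tree2 spl_inc_tree chain2 spl_root_chain).
- by move=> x xV2; rewrite mem_cat xV2 orbT.
- exact: mem_spl_chain2.
by move=> x xV2 xC2; rewrite spl_par2 ?mem_spl_chain2.
Qed.

Lemma spl_offchain_sons1 i : i \in V1 ->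
  count (fun x => [&& x \notin C, x != troot VR & pR x == i]) VR =
  count (fun x => [&& x \notin C1, x != troot V1 & p1 x == i]) V1.
Proof.
move=> iV1; rewrite count_cat [X in _ + X](_ : _ = 0) ?addn0.
  apply: eq_in_count => x xV1 /=; rewrite mem_spl_chain1 //.
  case xC1: (x \in C1) => //=.
  have xr1 : x != troot V1 by case: chain1 => _ rC _; apply: contraFneq xC1 => ->.
  have xrR : x != troot VR.
    by apply: contraFneq xC1 => xr; rewrite -mem_spl_chain1 // xr spl_troot_chain.
  by rewrite xr1 xrR spl_par1 ?mem_spl_chain1 ?xC1.
rewrite -(count_pred0 V2); apply: eq_in_count => x xV2 /=.
apply/negbTE/and3P => -[xC _ /eqP pxi].
have xr2 : x != troot V2.
  by case: chain2 => _ rC _; apply: contraNneq xC => ->; rewrite mem_cat rC orbT.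
by move: (father_mem tree2 xV2 xr2); rewrite -spl_par2 // pxi (negbTE (notin_V2 iV1)).
Qed.

Lemma spl_offchain_sons2 i : i \in V2 ->
  count (fun x => [&& x \notin C, x != troot VR & pR x == i]) VR =
  count (fun x => [&& x \notin C2, x != troot V2 & p2 x == i]) V2.
Proof.
move=> iV2; rewrite count_cat [X in X + _](_ : _ = 0) ?add0n.
  apply: eq_in_count => x xV2 /=; rewrite mem_spl_chain2 //.
  case xC2: (x \in C2) => //=.
  have xr2 : x != troot V2 by case: chain2 => _ rC _; apply: contraFneq xC2 => ->.
  have xrR : x != troot VR.
    by apply: contraFneq xC2 => xr; rewrite -mem_spl_chain2 // xr spl_troot_chain.
  by rewrite xr2 xrR spl_par2 ?mem_spl_chain2 ?xC2.
rewrite -(count_pred0 V1); apply: eq_in_count => x xV1 /=.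
apply/negbTE/and3P => -[xC _ /eqP pxi].
have xr1 : x != troot V1.
  by case: chain1 => _ rC _; apply: contraNneq xC => ->; rewrite mem_cat rC.
by move: (father_mem tree1 xV1 xr1); rewrite -spl_par1 // pxi (negbTE (notin_V1 iV2)).
Qed.

Hypothesis v2_lt_v1 : v2 < v1.

Lemma spl_chain_sons i :
  count (fun x => [&& x \in C, x != troot VR & pR x == i]) VR = (i \in C) && (i != v1).
Proof.
apply: (count_root_chain_sons spl_inc_tree i spl_root_chain).
  by rewrite mem_cat chain_self.
move=> c; rewrite mem_cat => /orP [/(chain_le tree1) //|/(chain_le tree2) cv2].
exact: leq_trans cv2 (ltnW v2_lt_v1).
Qed.

Lemma spl_sons1 i : i \in V1 -> sons VR pR i = sons V1 p1 i.
Proof.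
move=> iV1; rewrite (sons_split _ _ C) (sons_split _ _ C1).
rewrite spl_offchain_sons1 // spl_chain_sons mem_spl_chain1 //.
by rewrite (count_root_chain_sons tree1 i chain1 (chain_self p1 v1V) (@chain_le _ _ tree1 v1)).
Qed.

Lemma spl_sons2 i : i \in V2 -> sons VR pR i = sons V2 p2 i + (i == v2).
Proof.
move=> iV2; rewrite (sons_split _ _ C) (sons_split _ _ C2).
rewrite spl_offchain_sons2 // spl_chain_sons mem_spl_chain2 //.
rewrite (count_root_chain_sons tree2 i chain2 (chain_self p2 v2V) (@chain_le _ _ tree2 v2)).
have -> : i != v1 by apply: contraTneq iV2 => ->; apply: notin_V2.
by have [->|] := eqVneq i v2; rewrite ?chain_self ?andbT ?addn0 //= addn0 addn1.
Qed.
End Splice.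

Lemma spl_recover V1 p1 q1 V2 p2 q2 v1 v2 w1 w2 :
  is_inc_tree V1 p1 -> is_inc_tree V2 p2 -> is_inc_tree V1 q1 -> is_inc_tree V2 q2 ->
  disjoint_seq V1 V2 -> v1 \in V1 -> v2 \in V2 -> w1 \in V1 -> w2 \in V2 ->
  (forall x, x \in spl_vert V1 V2 -> x != troot (spl_vert V1 V2) ->
     spl_par V1 q1 w1 V2 q2 w2 x = spl_par V1 p1 v1 V2 p2 v2 x) ->
  (forall x, x \in V1 -> x != troot V1 -> q1 x = p1 x) /\
  (forall x, x \in V2 -> x != troot V2 -> q2 x = p2 x).
Proof.
move=> tp1 tp2 tq1 tq2 disjV v1V v2V w1V w2V eq_spl.
have eq_anc := eq_ancestor (spl_inc_tree tq1 tq2 disjV w1V w2V) eq_spl.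
split; apply: ancestor_father_eq => // i j iV jV.
  by rewrite (spl_ancestor1 tq1 tq2 disjV w1V w2V) // eq_anc
             -(spl_ancestor1 tp1 tp2 disjV v1V v2V).
by rewrite (spl_ancestor2 tq1 tq2 disjV w1V w2V) // eq_anc
           -(spl_ancestor2 tp1 tp2 disjV v1V v2V).
Qed.

Theorem lemma2p4 (V1 : seq nat) (p1 : nat -> nat) (V2 : seq nat) (p2 : nat -> nat)
    (v1 v2 : nat) :
  is_inc_tree V1 p1 -> is_inc_tree V2 p2 -> disjoint_seq V1 V2 ->
  v1 \in V1 -> v2 \in V2 -> v2 < v1 ->
  let VR := spl_vert V1 V2 in
  let pR := spl_par V1 p1 v1 V2 p2 v2 in
  ((forall i j, i \in V1 -> j \in V1 -> (ancestor V1 p1 i j <-> ancestor VR pR i j)) /\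
   (forall i j, i \in V2 -> j \in V2 -> (ancestor V2 p2 i j <-> ancestor VR pR i j))) /\
  (forall (q1 q2 : nat -> nat) (w1 w2 : nat),
     is_inc_tree V1 q1 -> is_inc_tree V2 q2 ->
     w1 \in V1 -> w2 \in V2 -> w2 < w1 ->
     (forall x, x \in VR -> x != troot VR -> spl_par V1 q1 w1 V2 q2 w2 x = pR x) ->
     (forall x, x \in V1 -> x != troot V1 -> q1 x = p1 x) /\
     (forall x, x \in V2 -> x != troot V2 -> q2 x = p2 x)) /\
  (forall i, i \in V1 -> sons VR pR i = sons V1 p1 i) /\
  sons VR pR v2 = (sons V2 p2 v2).+1 /\
  (forall i, i \in V2 -> i != v2 -> sons VR pR i = sons V2 p2 i).
Proof.
move=> tree1 tree2 disjV v1V v2V v2_lt_v1 VR pR.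
have sons2 := spl_sons2 tree1 tree2 disjV v1V v2V v2_lt_v1.
split; [split|split] => [i j iV jV|i j iV jV|q1 q2 w1 w2 tq1 tq2 w1V w2V _|].
- by rewrite (spl_ancestor1 tree1 tree2 disjV v1V v2V).
- by rewrite (spl_ancestor2 tree1 tree2 disjV v1V v2V).
- exact: spl_recover.
split; first exact: spl_sons1.
split; first by rewrite sons2 // eqxx addn1.
by move=> i iV2 iv2; rewrite sons2 // (negbTE iv2) addn0.
Qed.
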